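(* For $k=3$ and $d\in[6.74,7.5]$, the equation $\Psi_d(x)=x$ has a unique solution in $[\frac38,\frac12]$.
   Context: For $k=3$: $\hat\Psi(x)=\frac{1-2x^{2}}{1-x^{2}}$, $\dot\Psi(v)=\frac{1-v^{d-1}}{2-v^{d-1}}$, $\Psi_d=\dot\Psi\circ\hat\Psi$ ($d$ real). *)

From Stdlib Require Import Reals.
Open Scope R_scope.

(* k = 3 specialisation of the maps in the paper. *)
Definition Psi_hat (x : R) : R := (1 - 2 * x ^ 2) / (1 - x ^ 2).
Definition Psi_dot (d v : R) : R := (1 - Rpower v (d - 1)) / (2 - Rpower v (d - 1)).
Definition Psi (d x : R) : R := Psi_dot d (Psi_hat x).

From Stdlib Require Import Reals Lra Lia Psatz Ranalysis5.
From Coquelicot Require Import Coquelicot.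
Open Scope R_scope.

(* Write Psi d x = (1 - w) / (2 - w) with w = Psi_hat x ^ (d - 1).  Since Psi_hat
   decreases from 46/55 to 2/3 on [3/8, 1/2] and 17/3 < d - 1, every bound on w
   reduces to a bound on Psi_hat p ^ (17/3), which is certified by comparing the
   rational numbers Psi_hat p ^ 17 and c ^ 3.  Cellwise bounds of this kind give
   Psi d x > x on [3/8, 0.43]; on [0.43, 1/2] the estimate
   a^t - b^t <= t a^t (a/b - 1) gives Psi d y - Psi d x < y - x for x < y, so
   Psi d x - x is strictly decreasing there.  As Psi d (1/2) < 1/2, the
   intermediate value theorem yields a fixed point, which must lie in
   (0.43, 1/2], where it is unique. *)

Lemma Rpower_gt0 v t : 0 < Rpower v t.
Proof. exact (exp_pos _). Qed.

Lemma Rpower_antitone_le1 v s t : 0 < v <= 1 -> s <= t -> Rpower v t <= Rpower v s.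
Proof.
  intros Hv Hst; unfold Rpower.
  assert (Hln : ln v <= 0) by (rewrite <- ln_1; apply ln_le; lra).
  destruct (Req_dec (t * ln v) (s * ln v)) as [E|Hne]; [rewrite E; lra|].
  left; apply exp_increasing; nra.
Qed.

Lemma Rpower_lt_of_pow_lt V c m n : 0 < V -> 0 < c -> (0 < n)%nat ->
  V ^ m < c ^ n -> Rpower V (INR m / INR n) < c.
Proof.
  intros HV Hc Hn Hpow.
  destruct (Rlt_or_le (Rpower V (INR m / INR n)) c) as [|Hge]; [assumption|].
  assert (E : Rpower V (INR m / INR n) ^ n = V ^ m).
  { rewrite <- Rpower_pow, Rpower_mult by apply Rpower_gt0.
    replace (INR m / INR n * INR n) with (INR m) by (field; apply not_0_INR; lia).
    exact (Rpower_pow m V HV). }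
  pose proof (pow_incr c _ n (conj (Rlt_le _ _ Hc) Hge)); lra.
Qed.

(* From exp u >= 1 + u, applied to u = -t ln (a/b) and to u = ln (a/b). *)
Lemma Rpower_sub_le a b t : 0 < b <= a -> 0 <= t ->
  Rpower a t - Rpower b t <= t * Rpower a t * (a / b - 1).
Proof.
  intros Hab Ht.
  assert (Hab' : 0 < a / b) by (apply Rdiv_lt_0_compat; lra).
  set (l := ln (a / b)).
  assert (Hl : l <= a / b - 1).
  { pose proof (exp_ineq1_le l) as H; unfold l in *; rewrite exp_ln in H; lra. }
  assert (Eb : Rpower b t = Rpower a t * exp (- (t * l))).
  { unfold Rpower, l; rewrite ln_div by lra; rewrite <- exp_plus; f_equal; ring. }
  pose proof (Rpower_gt0 a t) as Hat.
  assert (H1 : Rpower a t * (1 - t * l) <= Rpower a t * exp (- (t * l))).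
  { apply Rmult_le_compat_l; [lra|]. pose proof (exp_ineq1_le (- (t * l))); lra. }
  assert (H2 : Rpower a t * (t * l) <= Rpower a t * (t * (a / b - 1))).
  { apply Rmult_le_compat_l; [lra|]. apply Rmult_le_compat_l; lra. }
  rewrite Eb; lra.
Qed.

Lemma strict_antitone_join (G : R -> R) a b c :
  (forall x y, a <= x -> x < y -> y <= b -> G y < G x) ->
  (forall x y, b <= x -> x < y -> y <= c -> G y < G x) ->
  forall x y, a <= x -> x < y -> y <= c -> G y < G x.
Proof.
  intros Hab Hbc x y Hx Hxy Hy.
  destruct (Rle_lt_dec y b); [apply Hab; lra|].
  destruct (Rle_lt_dec b x); [apply Hbc; lra|].
  apply Rlt_le_trans with (G b); [apply Hbc; lra|].
  destruct (Req_dec x b) as [->|]; [lra|].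
  left; apply Hab; lra.
Qed.

Lemma Psi_hat_antitone x y : 0 <= x <= y -> y < 1 -> Psi_hat y <= Psi_hat x.
Proof.
  intros Hxy Hy.
  assert (E : forall z, z ^ 2 < 1 -> Psi_hat z = 2 - / (1 - z ^ 2)).
  { intros z Hz; unfold Psi_hat; field; lra. }
  rewrite !E by nra.
  assert (/ (1 - x ^ 2) <= / (1 - y ^ 2)) by (apply Rinv_le_contravar; nra).
  lra.
Qed.

Lemma Psi_hat_in_01 x : 2 * x ^ 2 < 1 -> 0 < Psi_hat x <= 1.
Proof.
  intros Hx; unfold Psi_hat.
  assert (0 < 1 - x ^ 2) by nra.
  split; [apply Rdiv_lt_0_compat; lra|].
  apply Rle_div_l; nra.
Qed.

Lemma Psi_hat_ratio x y : 0 <= x <= y -> 2 * y ^ 2 < 1 ->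
  Psi_hat x / Psi_hat y - 1 = (y - x) * ((x + y) / ((1 - x ^ 2) * (1 - 2 * y ^ 2))).
Proof. intros; unfold Psi_hat; field; repeat split; nra. Qed.

Lemma Psi_hat_ratio_le x y q : 0 <= x <= y -> y <= q -> 2 * q ^ 2 < 1 ->
  Psi_hat x / Psi_hat y - 1 <= (y - x) * (2 * q / ((1 - q ^ 2) * (1 - 2 * q ^ 2))).
Proof.
  intros Hxy Hyq Hq.
  rewrite Psi_hat_ratio by nra.
  apply Rmult_le_compat_l; [lra|].
  unfold Rdiv; apply Rmult_le_compat; [lra| |lra|].
  - left; apply Rinv_0_lt_compat, Rmult_lt_0_compat; nra.
  - apply Rinv_le_contravar; [apply Rmult_lt_0_compat; nra|].
    apply Rmult_le_compat; nra.
Qed.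

Lemma Rpower_Psi_hat_le1 d x : 1 <= d -> 2 * x ^ 2 < 1 -> Rpower (Psi_hat x) (d - 1) <= 1.
Proof.
  intros Hd Hx.
  pose proof (Psi_hat_in_01 x Hx).
  rewrite <- (Rpower_O (Psi_hat x)) at 2 by lra.
  apply Rpower_antitone_le1; lra.
Qed.

Lemma Psi_continuous d x : 1 <= d -> 2 * x ^ 2 < 1 -> continuity_pt (Psi d) x.
Proof.
  intros Hd Hx.
  assert (H1 : 1 - x ^ 2 <> 0) by nra.
  assert (Hv : 0 < Psi_hat x) by apply (Psi_hat_in_01 x Hx).
  assert (Hw : 2 - Rpower (Psi_hat x) (d - 1) <> 0)
    by (pose proof (Rpower_Psi_hat_le1 d x Hd Hx); lra).
  apply continuity_pt_filterlim, (ex_derive_continuous (Psi d)).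
  unfold Psi, Psi_dot, Rpower, Psi_hat in *.
  auto_derive.
  repeat split; assumption.
Qed.

Definition Psi_dot_w (w : R) : R := (1 - w) / (2 - w).

Lemma Psi_dotE d v : Psi_dot d v = Psi_dot_w (Rpower v (d - 1)).
Proof. reflexivity. Qed.

Lemma lt_Psi_dot_w x w : 0 <= w -> x < 1 -> w * (1 - x) < 1 - 2 * x -> x < Psi_dot_w w.
Proof. intros Hw Hx H; unfold Psi_dot_w; apply Rlt_div_r; nra. Qed.

Lemma Psi_dot_w_lt_half w : 0 < w < 2 -> Psi_dot_w w < 1/2.
Proof. intros Hw; unfold Psi_dot_w; apply Rlt_div_l; lra. Qed.

Lemma Psi_dot_w_sub_lt wx wy W δ M : 0 <= wx <= W -> 0 <= wy <= W -> W < 2 -> 0 < δ ->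
  wx - wy <= δ * M -> M < (2 - W) ^ 2 -> Psi_dot_w wy - Psi_dot_w wx < δ.
Proof.
  intros Hx Hy HW Hδ Hsub HM; unfold Psi_dot_w.
  assert (HD : (2 - W) ^ 2 <= (2 - wx) * (2 - wy)) by nra.
  replace ((1 - wy) / (2 - wy) - (1 - wx) / (2 - wx))
    with ((wx - wy) / ((2 - wx) * (2 - wy))) by (field; lra).
  apply Rlt_div_l; nra.
Qed.

Section FixedPoint.

Variable d : R.
Hypothesis hd : 674/100 <= d <= 15/2.

Lemma Rpower_Psi_hat_lt p x c : 3/8 <= p <= x -> x <= 1/2 -> 0 < c ->
  Psi_hat p ^ 17 < c ^ 3 -> Rpower (Psi_hat x) (d - 1) < c.
Proof.
  intros Hpx Hx Hc Hcert.
  pose proof (Psi_hat_in_01 p ltac:(nra)) as Hp.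
  pose proof (Psi_hat_in_01 x ltac:(nra)).
  apply Rle_lt_trans with (Rpower (Psi_hat x) (17/3)); [apply Rpower_antitone_le1; lra|].
  apply Rle_lt_trans with (Rpower (Psi_hat p) (17/3)).
  { apply Rle_Rpower_l; [lra|]. split; [lra|]. apply Psi_hat_antitone; lra. }
  replace (17/3) with (INR 17 / INR 3) by (simpl; lra).
  apply Rpower_lt_of_pow_lt; [lra|lra|lia|exact Hcert].
Qed.

Lemma Psi_gt_id_cell p q c x : 3/8 <= p <= x -> x <= q <= 1/2 -> 0 < c ->
  Psi_hat p ^ 17 < c ^ 3 -> c * (1 - q) < 1 - 2 * q -> x < Psi d x.
Proof.
  intros Hpx Hxq Hc Hcert Hq.
  pose proof (Rpower_Psi_hat_lt p x c Hpx ltac:(lra) Hc Hcert).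
  pose proof (Rpower_gt0 (Psi_hat x) (d - 1)).
  assert (c < 1) by nra.
  unfold Psi; rewrite Psi_dotE.
  apply lt_Psi_dot_w; nra.
Qed.

Lemma Psi_gt_id x : 3/8 <= x <= 43/100 -> x < Psi d x.
Proof.
  intros Hx.
  destruct (Rle_lt_dec x (77/200)).
  { apply (Psi_gt_id_cell (3/8) (77/200) (4/11)); unfold Psi_hat; lra. }
  destruct (Rle_lt_dec x (79/200)).
  { apply (Psi_gt_id_cell (77/200) (79/200) (9/26)); unfold Psi_hat; lra. }
  destruct (Rle_lt_dec x (81/200)).
  { apply (Psi_gt_id_cell (79/200) (81/200) (6/19)); unfold Psi_hat; lra. }
  destruct (Rle_lt_dec x (83/200)).
  { apply (Psi_gt_id_cell (81/200) (83/200) (9/31)); unfold Psi_hat; lra. }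
  destruct (Rle_lt_dec x (21/50)).
  { apply (Psi_gt_id_cell (83/200) (21/50) (3/11)); unfold Psi_hat; lra. }
  destruct (Rle_lt_dec x (17/40)).
  { apply (Psi_gt_id_cell (21/50) (17/40) (7/27)); unfold Psi_hat; lra. }
  apply (Psi_gt_id_cell (17/40) (43/100) (10/41)); unfold Psi_hat; lra.
Qed.

(* 13/2 bounds d - 1, and 2q / ((1 - q^2) (1 - 2 q^2)) is the slope bound of
   Psi_hat_ratio_le. *)
Lemma Psi_sub_id_decr_cell p q W x y : 3/8 <= p <= x -> x < y <= q -> q <= 1/2 ->
  0 < W < 2 -> Psi_hat p ^ 17 < W ^ 3 ->
  13/2 * W * (2 * q / ((1 - q ^ 2) * (1 - 2 * q ^ 2))) < (2 - W) ^ 2 ->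
  Psi d y - y < Psi d x - x.
Proof.
  intros Hpx Hxy Hq HW Hcert Hslope.
  pose proof (Psi_hat_in_01 y ltac:(nra)).
  pose proof (Psi_hat_antitone x y ltac:(lra) ltac:(lra)).
  pose proof (Psi_hat_ratio_le x y q ltac:(lra) ltac:(lra) ltac:(nra)) as Hratio.
  pose proof (Rpower_sub_le (Psi_hat x) (Psi_hat y) (d - 1) ltac:(lra) ltac:(lra)) as Hsub.
  pose proof (Rpower_Psi_hat_lt p x W ltac:(lra) ltac:(lra) ltac:(lra) Hcert).
  pose proof (Rpower_Psi_hat_lt p y W ltac:(lra) ltac:(lra) ltac:(lra) Hcert).
  pose proof (Rpower_gt0 (Psi_hat x) (d - 1)).
  pose proof (Rpower_gt0 (Psi_hat y) (d - 1)).
  set (L := 2 * q / ((1 - q ^ 2) * (1 - 2 * q ^ 2))) in *.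
  assert (HL : 0 <= L).
  { apply Rle_mult_inv_pos; [lra|]. apply Rmult_lt_0_compat; nra. }
  unfold Psi; rewrite !Psi_dotE.
  set (wx := Rpower (Psi_hat x) (d - 1)) in *.
  set (wy := Rpower (Psi_hat y) (d - 1)) in *.
  assert (Hlip : wx - wy <= (y - x) * ((d - 1) * wx * L)).
  { assert ((d - 1) * wx * (Psi_hat x / Psi_hat y - 1) <= (d - 1) * wx * ((y - x) * L))
      by (apply Rmult_le_compat_l; [apply Rmult_le_pos|]; lra).
    lra. }
  assert (HM : (d - 1) * wx * L < (2 - W) ^ 2).
  { assert ((d - 1) * wx * L <= 13/2 * W * L)
      by (apply Rmult_le_compat_r; [|apply Rmult_le_compat]; lra).
    lra. }
  enough (Psi_dot_w wy - Psi_dot_w wx < y - x) by lra.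
  apply (Psi_dot_w_sub_lt wx wy W (y - x) ((d - 1) * wx * L)); lra.
Qed.

Lemma Psi_sub_id_decr x y : 43/100 <= x -> x < y -> y <= 1/2 -> Psi d y - y < Psi d x - x.
Proof.
  revert x y.
  apply (strict_antitone_join (fun z => Psi d z - z) _ (44/100)).
  { intros x y Hx Hxy Hy.
    apply (Psi_sub_id_decr_cell (43/100) (44/100) (233/1000)); unfold Psi_hat; lra. }
  apply (strict_antitone_join _ _ (47/100)).
  { intros x y Hx Hxy Hy.
    apply (Psi_sub_id_decr_cell (44/100) (47/100) (53/250)); unfold Psi_hat; lra. }
  intros x y Hx Hxy Hy.
  apply (Psi_sub_id_decr_cell (47/100) (1/2) (19/125)); unfold Psi_hat; lra.
Qed.

Lemma Psi_fixed_point_exists : exists x, 3/8 <= x <= 1/2 /\ Psi d x = x.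
Proof.
  assert (Hlo : 3/8 - Psi d (3/8) < 0) by (pose proof (Psi_gt_id (3/8)); lra).
  assert (Hhi : 0 < 1/2 - Psi d (1/2)).
  { unfold Psi; rewrite Psi_dotE.
    pose proof (Rpower_Psi_hat_le1 d (1/2) ltac:(lra) ltac:(lra)).
    pose proof (Rpower_gt0 (Psi_hat (1/2)) (d - 1)).
    pose proof (Psi_dot_w_lt_half (Rpower (Psi_hat (1/2)) (d - 1)) ltac:(lra)).
    lra. }
  destruct (IVT_interv (fun z => z - Psi d z) (3/8) (1/2)) as [x [Hx Hfx]];
    [|lra|exact Hlo|exact Hhi|].
  - intros a Ha.
    apply (continuity_pt_minus id (Psi d)).
    + apply derivable_continuous_pt, derivable_pt_id.
    + apply Psi_continuous; nra.
  - exists x; split; [exact Hx|lra].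
Qed.

Lemma Psi_fixed_point_gt x : 3/8 <= x <= 1/2 -> Psi d x = x -> 43/100 < x.
Proof.
  intros Hx Hfx.
  destruct (Rle_lt_dec x (43/100)); [|assumption].
  pose proof (Psi_gt_id x ltac:(lra)); lra.
Qed.

End FixedPoint.

Theorem lemma4p1 (d : R) (hd : 674/100 <= d <= 15/2) :
  exists! x : R, 3/8 <= x <= 1/2 /\ Psi d x = x.
Proof.
  destruct (Psi_fixed_point_exists d hd) as [x [Hx Hfx]].
  exists x; split; [split; assumption|].
  intros y [Hy Hfy].
  pose proof (Psi_fixed_point_gt d hd x Hx Hfx).
  pose proof (Psi_fixed_point_gt d hd y Hy Hfy).
  destruct (Rtotal_order x y) as [Hxy|[Hxy|Hxy]]; [|exact Hxy|].
  - pose proof (Psi_sub_id_decr d hd x y ltac:(lra) Hxy ltac:(lra)); lra.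
  - pose proof (Psi_sub_id_decr d hd y x ltac:(lra) Hxy ltac:(lra)); lra.
Qed.
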